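(* A formula $\varphi(\overline{x})$ of a complete theory $T$ is constantizable if and only if $\varphi(\overline{x})$ is $T$-equivalent to a Boolean combination of formulas of the form $x\approx y$ and $T$-formulas (without parameters) having finitely many solutions.
   Context: A $T$-formula $\varphi(\overline{x})$ is constantizable if $T$ has an expansion $T'$ (a complete theory $T'\supseteq T$ in a larger language) such that $\varphi(\overline{x})$ is $T'$-equivalent to a Boolean combination of formulas of the forms $x\approx y$ and $x\approx c$, with variables $x,y$ and constant symbols $c$ of the language of $T'$. *)

From mathcomp Require Import all_boot.
Set Implicit Arguments. Unset Strict Implicit. Unset Printing Implicit Defensive.

(* A first-order signature: function symbols (constants = arity 0) and relation symbols. *)
Record signature := Signature {
  funsym : Type; fun_ar : funsym -> nat;
  relsym : Type; rel_ar : relsym -> nat }.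

Section Syntax.
Variable L : signature.

Inductive term : Type :=
  | Var : nat -> term
  | App : forall f : funsym L, ('I_(fun_ar f) -> term) -> term.

Inductive formula : Type :=
  | FTrue | FFalse
  | Eq : term -> term -> formula
  | Rel : forall r : relsym L, ('I_(rel_ar r) -> term) -> formula
  | Not : formula -> formula
  | And : formula -> formula -> formula
  | Or : formula -> formula -> formula
  | Ex : nat -> formula -> formula
  | All : nat -> formula -> formula.

Fixpoint occurs (x : nat) (t : term) : Prop :=
  match t with
  | Var y => x = y
  | App f args => exists i, occurs x (args i)
  end.

Fixpoint free (x : nat) (phi : formula) : Prop :=
  match phi with
  | FTrue | FFalse => False
  | Eq t u => occurs x t \/ occurs x u
  | Rel r args => exists i, occurs x (args i)
  | Not p => free x p
  | And p q | Or p q => free x p \/ free x q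
  | Ex y p | All y p => x <> y /\ free x p
  end.

Definition sentence (phi : formula) := forall x, ~ free x phi.
Definition vars_in (xs : seq nat) (phi : formula) := forall x, free x phi -> x \in xs.

Record structure := Structure {
  carrier :> Type;
  witness : carrier;
  ifun : forall f : funsym L, ('I_(fun_ar f) -> carrier) -> carrier;
  irel : forall r : relsym L, ('I_(rel_ar r) -> carrier) -> Prop }.

Definition upd (M : Type) (e : nat -> M) (x : nat) (a : M) : nat -> M :=
  fun y => if y == x then a else e y.

Fixpoint eval (M : structure) (e : nat -> M) (t : term) : M :=
  match t with
  | Var x => e x
  | App f args => @ifun M f (fun i => eval e (args i))
  end.

Fixpoint sat (M : structure) (e : nat -> M) (phi : formula) : Prop :=
  match phi with
  | FTrue => True
  | FFalse => False
  | Eq t u => eval e t = eval e u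
  | Rel r args => @irel M r (fun i => eval e (args i))
  | Not p => ~ sat e p
  | And p q => sat e p /\ sat e q
  | Or p q => sat e p \/ sat e q
  | Ex x p => exists a : M, sat (upd e x a) p
  | All x p => forall a : M, sat (upd e x a) p
  end.

Definition theory := formula -> Prop.

Definition is_model (M : structure) (T : theory) :=
  forall s, T s -> forall e : nat -> M, sat e s.

Definition consequence (T : theory) (s : formula) :=
  forall M : structure, is_model M T -> forall e : nat -> M, sat e s.

Definition complete_theory (T : theory) :=
  [/\ forall s, T s -> sentence s,
      exists M : structure, is_model M T
    & forall s, sentence s -> consequence T s \/ consequence T (Not s)].

Definition T_equiv (T : theory) (phi psi : formula) :=
  forall M : structure, is_model M T -> forall e : nat -> M, sat e phi <-> sat e psi.

Definition finitely_many_solutions (T : theory) (psi : formula) :=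
  forall M : structure, is_model M T ->
    exists n (sol : 'I_n -> nat -> M), forall e : nat -> M, sat e psi ->
      exists i, forall x, free x psi -> sol i x = e x.

Inductive boolcomb (A : formula -> Prop) : formula -> Prop :=
  | bc_atom p : A p -> boolcomb A p
  | bc_true : boolcomb A FTrue
  | bc_false : boolcomb A FFalse
  | bc_not p : boolcomb A p -> boolcomb A (Not p)
  | bc_and p q : boolcomb A p -> boolcomb A q -> boolcomb A (And p q)
  | bc_or p q : boolcomb A p -> boolcomb A q -> boolcomb A (Or p q).

Definition eq_atom (xs : seq nat) (phi : formula) :=
  exists x y, [/\ x \in xs, y \in xs & phi = Eq (Var x) (Var y)].

Definition const_atom (xs : seq nat) (phi : formula) :=
  exists x (c : funsym L) (args : 'I_(fun_ar c) -> term),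
    [/\ x \in xs, fun_ar c = 0 & phi = Eq (Var x) (App args)].

End Syntax.

Arguments Var {L}.
Arguments FTrue {L}.
Arguments FFalse {L}.

(* L' is a larger language than L: injective arity-preserving symbol maps *)
Record sig_embedding (L L' : signature) := SigEmbedding {
  emb_f : funsym L -> funsym L';
  emb_f_ar : forall f, fun_ar (emb_f f) = fun_ar f;
  emb_f_inj : injective emb_f;
  emb_r : relsym L -> relsym L';
  emb_r_ar : forall r, rel_ar (emb_r r) = rel_ar r;
  emb_r_inj : injective emb_r }.

Section Translation.
Variables (L L' : signature) (E : sig_embedding L L').

Fixpoint tr_term (t : term L) : term L' :=
  match t with
  | Var x => Var x
  | App f args => App (fun i => tr_term (args (cast_ord (emb_f_ar E f) i)))
  end.

Fixpoint tr_form (phi : formula L) : formula L' :=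
  match phi with
  | FTrue => FTrue
  | FFalse => FFalse
  | Eq t u => Eq (tr_term t) (tr_term u)
  | Rel r args => Rel (fun i => tr_term (args (cast_ord (emb_r_ar E r) i)))
  | Not p => Not (tr_form p)
  | And p q => And (tr_form p) (tr_form q)
  | Or p q => Or (tr_form p) (tr_form q)
  | Ex x p => Ex x (tr_form p)
  | All x p => All x (tr_form p)
  end.
End Translation.

Definition constantizable (L : signature) (T : theory L) (xs : seq nat) (phi : formula L) :=
  exists (L' : signature) (E : sig_embedding L L') (T' : theory L'),
    [/\ complete_theory T',
        (forall s, T s -> T' (tr_form E s))
      & exists psi, boolcomb (fun chi => eq_atom xs chi \/ const_atom xs chi) psi
                    /\ T_equiv T' (tr_form E phi) psi].

From mathcomp Require Import all_boot boolp.
Set Implicit Arguments. Unset Strict Implicit. Unset Printing Implicit Defensive.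

(* Both directions go through pattern invariance: a property of assignments in a model is
   pattern invariant over a finite list l of elements when it only depends on which variables
   of xs are equal and which of them take which value in l.  A Boolean combination of x = y
   and x = c is pattern invariant over the values of the constants, and a formula with
   finitely many solutions is pattern invariant over the values of its solutions.
   Conversely, in the expansion naming every element, a pattern invariant property is
   defined by a Boolean combination of x = y and x = c; the complete theory of that
   expansion gives the backward direction.

   For the forward direction, phi is pattern invariant over some finite l in a model N of T.
   Call a parameter a relevant if, for some assignment, moving the class of a among xs to
   any of more than size l + size xs distinct values changes phi.  Relevance is expressed
   by a formula F(z) without parameters, and relevant parameters lie in l.  When N is
   infinite, an irrelevant parameter can be traded for a fresh value without changing phi,
   so phi is pattern invariant over the finite set F(N) (when N is finite, take F := true).
   By completeness F is finite in every model of T, and phi is T-equivalent to a Boolean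
   combination of x = y, F(x) and, for each set S of variables and equality pattern E,
   "the variables in S take values in F, and the others can be given values outside F,
   with pattern E, satisfying phi"; the free variables of the latter lie in S, so it has
   finitely many solutions. *)

Section Semantics.
Variable L : signature.
Implicit Types (M : structure L) (p q : formula L) (t : term L).

Lemma eq_eval M (e e' : nat -> M) t :
  (forall x, occurs x t -> e x = e' x) -> eval e t = eval e' t.
Proof.
elim: t => [x|f args IH] eq_e /=; first exact: eq_e.
congr ifun; apply: funext => i; apply: IH => x xi; apply: eq_e; by exists i.
Qed.

Lemma eq_sat M p (e e' : nat -> M) :
  (forall x, free x p -> e x = e' x) -> sat e p <-> sat e' p.
Proof.
elim: p e e' => [||t u|r args|p IH|p IHp q IHq|p IHp q IHq|y p IH|y p IH] e e' eq_e //=.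
- by rewrite !(@eq_eval _ e e') // => x fx; apply: eq_e; [right|left].
- suff -> : (fun i => eval e (args i)) = (fun i => eval e' (args i)) by [].
  apply: funext => i; apply: eq_eval => x xi; apply: eq_e; by exists i.
- by rewrite (IH e e').
- by rewrite (IHp e e') ?(IHq e e') // => x fx; apply: eq_e; [right|left].
- by rewrite (IHp e e') ?(IHq e e') // => x fx; apply: eq_e; [right|left].
- have eq_upd a : forall x, free x p -> upd e y a x = upd e' y a x.
    by move=> x fx; rewrite /upd; case: eqP => // xy; apply: eq_e.
  by split=> -[a Ha]; exists a; apply/(IH _ _ (eq_upd a)).
- have eq_upd a : forall x, free x p -> upd e y a x = upd e' y a x.
    by move=> x fx; rewrite /upd; case: eqP => // xy; apply: eq_e.
  by split=> Ha a; apply/(IH _ _ (eq_upd a)).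
Qed.

Definition Exs (ys : seq nat) p := foldr (@Ex L) p ys.
Definition Alls (ys : seq nat) p := foldr (@All L) p ys.
Definition Iff p q := Or (And p q) (And (Not p) (Not q)).
Definition lit (b : bool) p := if b then p else Not p.

Lemma sat_Exs M ys p (e : nat -> M) :
  sat e (Exs ys p) <-> exists g : nat -> M, (forall x, x \notin ys -> g x = e x) /\ sat g p.
Proof.
elim: ys e => [|y ys IH] e /=.
  split=> [pe|[g [eq_g pg]]]; first by exists e.
  by rewrite -(funext (fun x => eq_g x isT)).
split=> [[a /IH [g [eq_g pg]]]|[g [eq_g pg]]].
  exists g; split=> // x; rewrite inE negb_or => /andP[xy xys].
  by rewrite eq_g // /upd (negbTE xy).
exists (g y); apply/IH; exists g; split=> // x xys; rewrite /upd.
by case: eqP => [->//|/eqP xy]; apply: eq_g; rewrite inE negb_or xy.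
Qed.

Lemma free_Exs ys p x : free x (Exs ys p) -> x \notin ys /\ free x p.
Proof.
elim: ys => [|y ys IH] //= [/eqP xy /IH [xys fx]].
by rewrite inE negb_or xy.
Qed.

Lemma free_Alls ys p x : free x (Alls ys p) -> x \notin ys /\ free x p.
Proof.
elim: ys => [|y ys IH] //= [/eqP xy /IH [xys fx]].
by rewrite inE negb_or xy.
Qed.

Lemma sat_Alls M ys p (e : nat -> M) :
  sat e (Alls ys p) <-> forall g : nat -> M, (forall x, x \notin ys -> g x = e x) -> sat g p.
Proof.
elim: ys e => [|y ys IH] e /=.
  split=> [pe g eq_g|all_p]; last exact: all_p.
  by rewrite (funext (fun x => eq_g x isT)).
split=> [all_p g eq_g|all_p a]; last first.
  apply/IH => g eq_g; apply: all_p => x; rewrite inE negb_or => /andP[xy xys].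
  by rewrite eq_g // /upd (negbTE xy).
have /IH := all_p (g y); apply => x xys; rewrite /upd.
by case: eqP => [->//|/eqP xy]; apply: eq_g; rewrite inE negb_or xy.
Qed.

Lemma sat_Iff M (e : nat -> M) p q : sat e (Iff p q) <-> (sat e p <-> sat e q).
Proof. by rewrite /=; split; [tauto|case: (EM (sat e p)); tauto]. Qed.

Lemma free_Iff p q x : free x (Iff p q) -> free x p \/ free x q.
Proof. by rewrite /=; tauto. Qed.

Lemma sat_lit M (e : nat -> M) b p : sat e (lit b p) <-> (sat e p <-> b).
Proof.
case: b => /=; split.
- by move=> pe; split.
- by case=> _; apply.
- by move=> np; split=> // /np.
- by case=> pf _ pe; have := pf pe.
Qed.

Lemma sat_bigAnd M (I : eqType) (s : seq I) (f : I -> formula L) (e : nat -> M) :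
  sat e (\big[@And L/FTrue]_(i <- s) f i) <-> forall i, i \in s -> sat e (f i).
Proof.
elim: s => [|j s IH]; rewrite ?big_nil ?big_cons //=.
rewrite IH; split=> [[fj fs] i|fs]; first by rewrite inE => /predU1P[->|/fs].
by split=> [|i si]; apply: fs; rewrite inE ?eqxx ?si ?orbT.
Qed.

Lemma sat_bigOr M (I : eqType) (s : seq I) (f : I -> formula L) (e : nat -> M) :
  sat e (\big[@Or L/FFalse]_(i <- s) f i) <-> exists2 i, i \in s & sat e (f i).
Proof.
elim: s => [|j s IH]; rewrite ?big_nil ?big_cons /=; first by split=> // -[].
rewrite IH; split=> [[fj|[i si fi]]|[i]]; first by exists j; rewrite ?inE ?eqxx.
  by exists i; rewrite // inE si orbT.
by rewrite inE => /predU1P[->|si fi]; [left|right; exists i].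
Qed.

Lemma free_bigAnd (I : eqType) (s : seq I) (f : I -> formula L) x :
  free x (\big[@And L/FTrue]_(i <- s) f i) -> exists2 i, i \in s & free x (f i).
Proof.
elim: s => [|j s IH]; rewrite ?big_nil ?big_cons //= => -[fj|/IH[i si fi]].
  by exists j; rewrite ?inE ?eqxx.
by exists i; rewrite // inE si orbT.
Qed.

Lemma free_bigOr (I : eqType) (s : seq I) (f : I -> formula L) x :
  free x (\big[@Or L/FFalse]_(i <- s) f i) -> exists2 i, i \in s & free x (f i).
Proof.
elim: s => [|j s IH]; rewrite ?big_nil ?big_cons //= => -[fj|/IH[i si fi]].
  by exists j; rewrite ?inE ?eqxx.
by exists i; rewrite // inE si orbT.
Qed.
End Semantics.

Section BooleanCombinations.
Variable L : signature.

Lemma boolcomb_of_dependence (M : structure L) (P : formula L -> Prop) (W : seq nat)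
    (I : eqType) (atom : I -> formula L) (s : seq I) (Q : (nat -> M) -> Prop) :
  (forall i, i \in s -> P (atom i) /\ vars_in W (atom i)) ->
  (forall e e', (forall i, i \in s -> sat e (atom i) <-> sat e' (atom i)) -> Q e -> Q e') ->
  exists psi, [/\ boolcomb P psi, vars_in W psi & forall e, Q e <-> sat e psi].
Proof.
elim: s Q => [|j s IH] Q atomsP Qdep.
  have [[e0 Qe0]|noQ] := EM (exists e, Q e).
    exists FTrue; split=> [|//|e]; first exact: bc_true.
    by split=> // _; apply: Qdep Qe0.
  exists FFalse; split=> [|//|e]; first exact: bc_false.
  by split=> // Qe; apply: noQ; exists e.
have [Pj Wj] := atomsP j (mem_head j s).
pose Q_ (b : bool) (e : nat -> M) := exists e',
  [/\ forall i, i \in s -> (sat e (atom i) <-> sat e' (atom i)), sat e' (atom j) <-> b & Q e'].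
have IHb b : exists psi, [/\ boolcomb P psi, vars_in W psi & forall e, Q_ b e <-> sat e psi].
  apply: IH => [i si|e e' agree [e'' [agree' jb Qe'']]].
    by apply: atomsP; rewrite inE si orbT.
  by exists e''; split=> // i si; rewrite -(agree i si); apply: agree'.
have [[psi1 [bc1 W1 def1]] [psi0 [bc0 W0 def0]]] := (IHb true, IHb false).
exists (Or (And (atom j) psi1) (And (Not (atom j)) psi0)); split.
- by apply: bc_or; apply: bc_and => //; [exact: bc_atom | apply: bc_not; exact: bc_atom].
- by move=> x /= [[/Wj|/W1]|[/Wj|/W0]].
move=> e /=; rewrite -def1 -def0; split=> [Qe|].
  by case: (EM (sat e (atom j))) => je; [left|right]; split=> //; exists e.
have back b e' : (sat e (atom j) <-> b) ->
    (forall i, i \in s -> (sat e (atom i) <-> sat e' (atom i))) ->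
    (sat e' (atom j) <-> b) -> Q e' -> Q e.
  move=> ejb agree e'jb; apply: (Qdep e') => i; rewrite inE => /predU1P[->|si].
    by rewrite e'jb ejb.
  by rewrite (agree i si).
case=> [[je [e' [agree e'j Qe']]]|[je [e' [agree e'j Qe']]]]; apply: (back _ e' _ agree e'j Qe').
  by split.
by split=> // /je.
Qed.
End BooleanCombinations.

Section CompleteTheories.
Variables (L : signature) (T : theory L).
Hypothesis T_complete : complete_theory T.

Lemma complete_valid (N : structure L) W p : is_model N T -> vars_in W p ->
  (forall e : nat -> N, sat e p) -> forall M, is_model M T -> forall e : nat -> M, sat e p.
Proof.
move=> NT Wp p_valid M MT e; have [_ _ decide] := T_complete.
have closed : sentence (Alls W p) by move=> x /free_Alls [xW /Wp]; rewrite (negbTE xW).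
have [Tp|Tnp] := decide _ closed.
  by have /sat_Alls := Tp M MT e; apply.
by have [] := Tnp N NT (fun _ => witness N); apply/sat_Alls => g _.
Qed.

Lemma complete_T_equiv (N : structure L) W p q : is_model N T -> vars_in W p -> vars_in W q ->
  (forall e : nat -> N, sat e p <-> sat e q) -> T_equiv T p q.
Proof.
move=> NT Wp Wq pq M MT e; apply/sat_Iff; apply: (complete_valid NT (W := W)) => //.
  by move=> x /= [[/Wp|/Wq]|[/Wp|/Wq]].
by move=> e'; apply/sat_Iff.
Qed.
End CompleteTheories.

Definition theory_of (L : signature) (M : structure L) : theory L :=
  fun s => sentence s /\ forall e : nat -> M, sat e s.

Lemma theory_of_model (L : signature) (M : structure L) : is_model M (theory_of M).
Proof. by move=> s []. Qed.

Lemma theory_of_complete (L : signature) (M : structure L) : complete_theory (theory_of M).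
Proof.
split=> [s []//||s closed]; first by exists M; exact: theory_of_model.
have [s_valid|not_valid] := EM (forall e : nat -> M, sat e s).
  by left=> M' M'T e; apply: M'T.
right=> M' M'T e; apply: M'T; split=> // e0 se0; apply: not_valid => e1.
by apply: (iffLR (eq_sat _)) se0 => x /closed.
Qed.

(** * Reducts and the expansion naming every element *)

Section Reducts.
Variables (L L' : signature) (E : sig_embedding L L').

Definition reduct (M' : structure L') : structure L :=
  @Structure L M' (witness M')
    (fun f args => ifun (f := emb_f E f) (fun i => args (cast_ord (emb_f_ar E f) i)))
    (fun r args => irel (r := emb_r E r) (fun i => args (cast_ord (emb_r_ar E r) i))).

Lemma eval_reduct (M' : structure L') (e : nat -> M') t :
  eval e (tr_term E t) = eval (M := reduct M') e t.
Proof. by elim: t => [x|f args IH] //=; congr ifun; apply: funext => i; apply: IH. Qed.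

Lemma sat_reduct (M' : structure L') p (e : nat -> M') :
  sat e (tr_form E p) <-> sat (M := reduct M') e p.
Proof.
elim: p e => [||t u|r args|p IH|p IHp q IHq|p IHp q IHq|x p IH|x p IH] e /=.
- by [].
- by [].
- by rewrite !eval_reduct.
- by under eq_fun do rewrite eval_reduct.
- by rewrite IH.
- by rewrite IHp IHq.
- by rewrite IHp IHq.
- by split=> -[a pa]; exists a; apply/IH.
- by split=> pa a; apply/IH.
Qed.

Lemma occurs_tr x t : occurs x (tr_term E t) <-> occurs x t.
Proof.
elim: t => [y|f args IH] //=; split=> [[i /IH xi]|[i xi]].
  by exists (cast_ord (emb_f_ar E f) i).
by exists (cast_ord (esym (emb_f_ar E f)) i); apply/IH; rewrite cast_ordKV.
Qed.

Lemma free_tr x p : free x (tr_form E p) <-> free x p.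
Proof.
elim: p => [||t u|r args|p IH|p IHp q IHq|p IHp q IHq|y p IH|y p IH] //=.
- by rewrite !occurs_tr.
- split=> [[i /occurs_tr xi]|[i xi]]; first by exists (cast_ord (emb_r_ar E r) i).
  by exists (cast_ord (esym (emb_r_ar E r)) i); apply/occurs_tr; rewrite cast_ordKV.
- by rewrite IHp IHq.
- by rewrite IHp IHq.
- by rewrite IH.
- by rewrite IH.
Qed.
End Reducts.

Section Names.
Variables (L : signature) (M : structure L).

Definition names_sig : signature :=
  @Signature (funsym L + M) (fun f => if f is inl f then fun_ar f else 0) (relsym L) (@rel_ar L).

Definition names_emb : sig_embedding L names_sig.
Proof.
by refine (@SigEmbedding L names_sig (@inl (funsym L) M) (fun _ => erefl) _ id (fun _ => erefl) _)
  => // f g [].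
Defined.

Definition named : structure names_sig :=
  @Structure names_sig M (witness M)
    (fun f => match f return ('I_(@fun_ar names_sig f) -> M) -> M with
              | inl f => @ifun L M f
              | inr a => fun _ => a end)
    (@irel L M).

Lemma eval_named (e : nat -> M) t : eval (M := named) e (tr_term names_emb t) = eval e t.
Proof.
elim: t => [x|f args IH] //=; congr ifun; apply: funext => i.
by rewrite IH cast_ord_id.
Qed.

Lemma sat_named p (e : nat -> M) : sat (M := named) e (tr_form names_emb p) <-> sat e p.
Proof.
elim: p e => [||t u|r args|p IH|p IHp q IHq|p IHp q IHq|x p IH|x p IH] e /=.
- by [].
- by [].
- by rewrite !eval_named.
- by under eq_fun do rewrite eval_named cast_ord_id.
- by rewrite IH.
- by rewrite IHp IHq.
- by rewrite IHp IHq.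
- by split=> -[a pa]; exists a; apply/IH.
- by split=> pa a; apply/IH.
Qed.

Definition name (a : M) : term names_sig := @App names_sig (inr a) (fun _ => Var 0).
End Names.

(** * Pattern invariance *)

Section PatternInvariance.
Variables (L : signature) (xs : seq nat).
Implicit Types (M : structure L).

Definition same_pattern M (l : seq {classic M}) (e e' : nat -> M) :=
  (forall x y, x \in xs -> y \in xs -> e x = e y <-> e' x = e' y) /\
  (forall x (c : {classic M}), x \in xs -> c \in l -> e x = c <-> e' x = c).

Definition pattern_invariant M (l : seq {classic M}) (Q : (nat -> M) -> Prop) :=
  forall e e', same_pattern l e e' -> Q e <-> Q e'.

Lemma same_pattern_sym M l (e e' : nat -> M) : same_pattern l e e' -> same_pattern l e' e.
Proof.
by case=> eq_e c_e; split=> [x y xxs yxs|x c xxs cl]; [rewrite (eq_e x y) | rewrite (c_e x c)].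
Qed.

Lemma same_pattern_trans M l (e1 e2 e3 : nat -> M) :
  same_pattern l e1 e2 -> same_pattern l e2 e3 -> same_pattern l e1 e3.
Proof.
case=> eq12 c12 [eq23 c23]; split=> [x y xxs yxs|x c xxs cl].
  by rewrite (eq12 x y) ?(eq23 x y).
by rewrite (c12 x c) ?(c23 x c).
Qed.

Lemma pattern_invariant_sub M (l l' : seq {classic M}) Q :
  {subset l <= l'} -> pattern_invariant l Q -> pattern_invariant l' Q.
Proof. by move=> ll' Qinv e e' [eq_e c_e]; apply: Qinv; split=> // x c xxs /ll'; apply: c_e. Qed.

Lemma boolcomb_pattern_invariant (A : formula L -> Prop) M :
  (forall p, A p -> exists l : seq {classic M}, pattern_invariant l (fun e => sat e p)) ->
  forall psi, boolcomb A psi ->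
  exists l : seq {classic M}, pattern_invariant l (fun e => sat e psi).
Proof.
have cat_inv (l l' : seq {classic M}) p q : pattern_invariant l (fun e => sat e p) ->
    pattern_invariant l' (fun e => sat e q) -> forall e e', same_pattern (l ++ l') e e' ->
  (sat e p <-> sat e' p) /\ (sat e q <-> sat e' q).
  move=> inv inv' e e' ee'.
  have sub : {subset l <= l ++ l'} by move=> c cl; rewrite mem_cat cl.
  have sub' : {subset l' <= l ++ l'} by move=> c cl; rewrite mem_cat cl orbT.
  by split; [apply: (pattern_invariant_sub sub inv) | apply: (pattern_invariant_sub sub' inv')].
move=> Ainv psi.
elim=> [p /Ainv //|||p _ [l inv]|p q _ [l inv] _ [l' inv']|p q _ [l inv] _ [l' inv']].
- by exists [::].
- by exists [::].
- by exists l => e e' /inv /= ->.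
- by exists (l ++ l') => e e' /(cat_inv _ _ _ _ inv inv') /= [-> ->].
- by exists (l ++ l') => e e' /(cat_inv _ _ _ _ inv inv') /= [-> ->].
Qed.

Lemma eq_atom_pattern_invariant M p :
  eq_atom xs p -> pattern_invariant [::] (fun e : nat -> M => sat e p).
Proof. by case=> x [y [xxs yxs ->]] e e' [eq_e _] /=; apply: eq_e. Qed.

Lemma const_atom_pattern_invariant M p :
  const_atom xs p -> exists l : seq {classic M}, pattern_invariant l (fun e => sat e p).
Proof.
case=> x [c [args [xxs c0 ->]]]; set t := App args.
have const e : eval e t = eval (fun _ => witness M) t.
  by apply: eq_eval => y /= [i]; move: (ltn_ord i); rewrite {2}c0.
exists [:: eval (fun _ => witness M) t] => e e' [_ c_e].
change (e x = eval e t <-> e' x = eval e' t).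
by rewrite !const; apply: c_e; rewrite ?inE.
Qed.

Lemma pattern_invariant_boolcomb M (l : seq {classic M}) (Q : (nat -> M) -> Prop) :
  pattern_invariant l Q ->
  exists psi, [/\ boolcomb (fun chi => eq_atom xs chi \/ const_atom xs chi) psi, vars_in xs psi
                & forall e, Q e <-> sat (M := named M) e psi].
Proof.
move=> Qinv.
pose atom (i : (nat * nat) + (nat * {classic M})) : formula (names_sig M) :=
  match i with inl (x, y) => Eq (Var x) (Var y) | inr (x, a) => Eq (Var x) (name a) end.
pose s := [seq inl (x, y) | x <- xs, y <- xs] ++ [seq inr (x, a) | x <- xs, a <- l].
apply: (@boolcomb_of_dependence _ (named M) _ xs _ atom s Q).
  move=> i; rewrite mem_cat => /orP[] /allpairsP[[x a] /= [xxs axs ->]].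
    by split; [left; exists x, a | move=> u /= [->|->]].
  split; first by right; exists x, (inr a), (fun _ => Var 0).
  by move=> u /= [->|[[]]].
move=> e e' agree; apply: (iffLR (Qinv e e' _)); split=> [x y xxs yxs|x c xxs cl].
  by apply: (agree (inl (x, y))); rewrite mem_cat allpairs_f.
by apply: (agree (inr (x, c))); rewrite mem_cat allpairs_f ?orbT.
Qed.
End PatternInvariance.

Lemma fms_pattern_invariant (L : signature) (T : theory L) xs (M : structure L) chi :
  is_model M T -> vars_in xs chi -> finitely_many_solutions T chi ->
  exists l : seq {classic M}, pattern_invariant xs l (fun e => sat e chi).
Proof.
move=> MT chi_xs /(_ M MT) [n [sol solP]].
set l := [seq (sol i x : {classic M}) | i <- enum 'I_n, x <- xs]; exists l.
suff half e e' : same_pattern xs l e e' -> sat e chi -> sat e' chi.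
  by move=> e e' ee'; split; apply: half => //; apply: same_pattern_sym.
move=> [_ c_e] chi_e; have [i soli] := solP e chi_e.
apply: (iffLR (eq_sat _)) chi_e => x fx; have xxs := chi_xs x fx.
have sol_l : (sol i x : {classic M}) \in l by rewrite allpairs_f ?mem_enum.
by have := c_e x _ xxs sol_l; rewrite soli // => -[/(_ erefl) ->].
Qed.

Lemma fms_boolcomb_constantizable (L : signature) (T : theory L) xs phi :
  complete_theory T -> vars_in xs phi ->
  (exists psi, boolcomb (fun chi => eq_atom xs chi \/
                          (vars_in xs chi /\ finitely_many_solutions T chi)) psi
               /\ T_equiv T phi psi) ->
  constantizable T xs phi.
Proof.
move=> T_complete phi_xs [psi [psi_bc phi_psi]].
have [T_closed [M MT] _] := T_complete.
have [l psi_inv] : exists l : seq {classic M}, pattern_invariant xs l (fun e => sat e psi).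
  apply: boolcomb_pattern_invariant psi_bc => chi [/eq_atom_pattern_invariant inv|[chi_xs chi_fms]].
    by exists [::].
  exact: fms_pattern_invariant MT chi_xs chi_fms.
have phi_inv : pattern_invariant xs l (fun e => sat e phi).
  by move=> e e' ee'; rewrite !(phi_psi M MT); apply: psi_inv.
have [psi' [psi'_bc psi'_xs phi_psi']] := pattern_invariant_boolcomb phi_inv.
exists (names_sig M), (names_emb M), (theory_of (named M)); split.
- exact: theory_of_complete.
- move=> s Ts; split; first by move=> x /free_tr; apply: T_closed.
  by move=> e; apply/sat_named; apply: MT.
exists psi'; split; first exact: psi'_bc.
apply: (complete_T_equiv (theory_of_complete (named M)) (theory_of_model (M := named M))
  (W := xs)) => //.
  by move=> x /free_tr /phi_xs.
by move=> e; rewrite sat_named; apply: phi_psi'.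
Qed.

Definition upd_on (A : Type) (e : nat -> A) (J : seq nat) (a : A) : nat -> A :=
  fun u => if u \in J then a else e u.

Definition assign (A : Type) (e : nat -> A) (ys : seq nat) (ws : seq A) : nat -> A :=
  fun u => if u \in ys then nth (e u) ws (index u ys) else e u.

Lemma assign_out (A : Type) (e : nat -> A) ys ws u : u \notin ys -> assign e ys ws u = e u.
Proof. by rewrite /assign => /negbTE ->. Qed.

Section Assign.
Variables (A : eqType) (e : nat -> A) (ys : seq nat) (ws : seq A).
Hypotheses (ys_uniq : uniq ys) (size_ws : size ws = size ys).

Lemma map_assign : map (assign e ys ws) ys = ws.
Proof.
apply: (@eq_from_nth _ (e 0)) => [|i]; rewrite size_map // => lt_i.
by rewrite (nth_map 0) // /assign mem_nth // index_uniq // (set_nth_default (e 0)) ?size_ws.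
Qed.

Lemma assign_inj : uniq ws -> {in ys &, injective (assign e ys ws)}.
Proof.
move=> /(uniqP (e 0)) nth_inj u v uys vys; rewrite /assign uys vys.
rewrite (set_nth_default (e 0)) 1?(set_nth_default (e 0) (e v)) ?size_ws ?index_mem // => eq_nth.
have := nth_inj (index u ys) (index v ys); rewrite !inE size_ws !index_mem => /(_ uys vys eq_nth).
by move=> eq_idx; rewrite -(nth_index 0 uys) eq_idx nth_index.
Qed.
End Assign.

Definition fresh_var (s : seq nat) : nat := (\max_(x <- s) x).+1.

Definition fresh (s : seq nat) (n : nat) : seq nat := iota (fresh_var s) n.

Lemma lt_fresh_var s x : x \in s -> x < fresh_var s.
Proof. by move=> xs; rewrite ltnS; apply: leq_bigmax_seq. Qed.

Lemma fresh_var_notin s : fresh_var s \notin s.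
Proof. by apply/negP => /lt_fresh_var; rewrite ltnn. Qed.

Lemma fresh_notin s n y : y \in fresh s n -> y \notin s.
Proof.
rewrite mem_iota => /andP[le_y _]; apply/negP => /lt_fresh_var.
by rewrite ltnNge le_y.
Qed.

Fixpoint subseqs (T : Type) (s : seq T) : seq (seq T) :=
  if s is x :: s' then [seq x :: t | t <- subseqs s'] ++ subseqs s' else [:: [::]].

Lemma filter_subseqs (T : eqType) (p : pred T) s : filter p s \in subseqs s.
Proof. by elim: s => //= x s IH; rewrite mem_cat; case: (p x); rewrite ?map_f ?IH ?orbT. Qed.

Lemma subseqs_sub (T : eqType) (s t : seq T) : t \in subseqs s -> {subset t <= s}.
Proof.
elim: s t => [|x s IH] t /=; first by rewrite inE => /eqP ->.
rewrite mem_cat => /orP[/mapP[t' /IH t's ->] y|/IH ts y /ts]; rewrite !inE.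
  by case/predU1P=> [->|/t's ->]; rewrite ?eqxx ?orbT.
by move->; rewrite orbT.
Qed.

Lemma bounded_cover (T : eqType) (P : T -> Prop) K :
  ~ (exists s, [/\ uniq s, size s = K.+1 & forall a, a \in s -> P a]) ->
  exists l : seq T, forall a, P a -> a \in l.
Proof.
elim: K P => [|K IH] P no_big.
  exists (Nil T) => a Pa; case: no_big; exists [:: a]; split=> // b.
  by rewrite inE => /eqP ->.
have [[a Pa]|noP] := EM (exists a, P a); last by exists (Nil T) => a Pa; case: noP; exists a.
have [l Pl] : exists l : seq T, forall b, P b /\ b <> a -> b \in l.
  apply: IH => -[s [s_uniq size_s sP]]; apply: no_big; exists (a :: s); split.
  - by rewrite /= s_uniq andbT; apply/negP => /sP [].
  - by rewrite /= size_s.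
  - by move=> b; rewrite inE => /predU1P[->|/sP []].
by exists (a :: l) => b Pb; rewrite inE; case: (eqVneq b a) => //= /eqP ba; apply: Pl.
Qed.

Lemma uniq_avoiding (T : eqType) (avoid : seq T) k :
  (forall l : seq T, exists a, a \notin l) ->
  exists ws, [/\ uniq ws, size ws = k & forall w, w \in ws -> w \notin avoid].
Proof.
move=> infinite; elim: k => [|k [ws [ws_uniq size_ws ws_avoid]]]; first by exists [::].
have [a] := infinite (ws ++ avoid); rewrite mem_cat negb_or => /andP[a_ws a_avoid].
exists (a :: ws); split; rewrite /= ?a_ws ?size_ws //.
by move=> w; rewrite inE => /predU1P[->|/ws_avoid].
Qed.

Lemma bounded_solutions (L : signature) (M : structure L) chi S (l : seq {classic M}) :
  vars_in S chi -> (forall e : nat -> M, sat e chi -> forall x, x \in S -> e x \in l) ->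
  exists n (sol : 'I_n -> nat -> M), forall e : nat -> M, sat e chi ->
    exists i, forall x, free x chi -> sol i x = e x.
Proof.
move=> chi_S chi_l; pose d : {classic (nat -> M)} := fun _ => witness M.
have [gs gsP] : exists gs : seq {classic (nat -> M)}, forall e : nat -> M,
    (forall x, x \in S -> e x \in l) -> exists2 g, g \in gs & forall x, x \in S -> g x = e x.
  elim: (S) => [|x S' [gs gsP]].
    by exists [:: d] => e _; exists d; rewrite ?mem_head.
  exists [seq upd g x a : {classic (nat -> M)}
           | a : {classic M} <- l, g : {classic (nat -> M)} <- gs].
  move=> e e_l.
  have [|g g_gs eq_g] := gsP e => [y yS'|]; first by apply: e_l; rewrite inE yS' orbT.
  exists (upd g x (e x)); first by rewrite allpairs_f ?e_l ?mem_head.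
  by move=> y; rewrite inE /upd; case: eqP => [->|_ /eq_g].
exists (size gs), (fun i => nth d gs i) => e /chi_l /gsP [g g_gs eq_g].
by exists (Ordinal (etrans (index_mem g gs) g_gs)) => x /chi_S xS /=; rewrite nth_index ?eq_g.
Qed.

Section PatternFormulas.
Variable L : signature.

Definition eq_pattern (vs : seq nat) (r : rel nat) : formula L :=
  \big[@And L/FTrue]_(u <- vs) \big[@And L/FTrue]_(v <- vs) lit (r u v) (Eq (Var u) (Var v)).

Lemma sat_eq_pattern (M : structure L) (e : nat -> M) vs r :
  sat e (eq_pattern vs r) <-> forall u v, u \in vs -> v \in vs -> (e u = e v <-> r u v).
Proof.
rewrite sat_bigAnd; split=> [pat u v uvs vvs|pat u uvs].
  by have /sat_bigAnd/(_ v vvs)/sat_lit := pat u uvs.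
by apply/sat_bigAnd => v vvs; apply/sat_lit/pat.
Qed.

Lemma free_eq_pattern vs r x : free x (eq_pattern vs r) -> x \in vs.
Proof.
move=> /free_bigAnd[u uvs /free_bigAnd[v vvs]].
by case: (r u v) => /= [[->|->]|[->|->]].
Qed.

Definition Dist (vs : seq nat) : formula L := eq_pattern vs eq_op.

Lemma sat_Dist (M : structure L) (e : nat -> M) vs : sat e (Dist vs) <-> {in vs &, injective e}.
Proof.
rewrite sat_eq_pattern; split=> [pat u v uvs vvs /(pat u v uvs vvs)/eqP //|inj u v uvs vvs].
by split=> [/inj -> //|/eqP ->].
Qed.

Section UnaryFormula.
Variables (z : nat) (F : formula L).
Hypothesis F_unary : forall x, free x F -> x = z.

Definition holds (M : structure L) (a : M) := sat (fun _ => a) F.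

Definition F_at (x : nat) : formula L := Ex z (And (Eq (Var z) (Var x)) F).

Lemma sat_F_at (M : structure L) (e : nat -> M) x : x != z -> sat e (F_at x) <-> holds (e x).
Proof.
move=> xz /=; rewrite /upd eqxx (negbTE xz).
have F_const a (g : nat -> M) : g z = a -> sat g F <-> holds a.
  by move=> gz; apply: eq_sat => y /F_unary ->.
split=> [[a [ea /(F_const a) Fa]]|Fe]; first by rewrite -ea; apply: Fa; rewrite eqxx.
by exists (e x); split=> //; apply/(F_const (e x)) => //; rewrite eqxx.
Qed.

Lemma free_F_at x y : free y (F_at x) -> y = x.
Proof. by move=> /= [yz [[/yz|->]|/F_unary/yz]]. Qed.

Lemma holds_finite_transfer (T : theory L) (N : structure L) (lF : seq {classic N}) :
  complete_theory T -> is_model N T -> (forall a : N, holds a -> a \in lF) ->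
  forall M, is_model M T -> exists l : seq {classic M}, forall a : M, holds a -> a \in l.
Proof.
move=> T_complete NT lF_F M MT.
set ws := fresh [:: z] (size lF).+1.
have ws_z w : w \in ws -> w != z by move/fresh_notin; rewrite inE.
(* F has no (size lF).+1 distinct solutions: true in N by pigeonhole, hence in M. *)
set th := Not (And (Dist ws) (\big[@And L/FTrue]_(w <- ws) F_at w)).
have th_ws : vars_in ws th.
  by move=> x /= [/free_eq_pattern //|/free_bigAnd[w wws /free_F_at ->]].
have th_N (e : nat -> N) : sat e th.
  move=> /= [/sat_Dist inj /sat_bigAnd Fws].
  have sub : {subset map (e : nat -> {classic N}) ws <= lF}.
    by move=> _ /mapP[w wws ->]; apply/lF_F/sat_F_at; [apply: ws_z | apply: Fws].
  have := uniq_leq_size _ sub; rewrite size_map size_iota ltnn map_inj_in_uniq //.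
  by rewrite iota_uniq => /(_ isT).
have th_M := complete_valid T_complete NT th_ws th_N MT.
apply: (bounded_cover (K := size lF)) => -[s [s_uniq size_s sF]].
have size_ws : size s = size ws by rewrite size_s size_iota.
pose d : nat -> {classic M} := fun _ => witness M; set e := assign d ws s.
apply: (th_M e); split; first exact/sat_Dist/(assign_inj size_ws s_uniq).
apply/sat_bigAnd => w wws; apply/sat_F_at; first exact: ws_z.
by apply: sF; rewrite -(map_assign d (iota_uniq _ _) size_ws) map_f.
Qed.
End UnaryFormula.
End PatternFormulas.

Arguments eq_pattern {L} vs r.
Arguments Dist {L} vs.

(** * Pattern invariance over a definable finite set *)

Section DefinableParameters.
Variables (L : signature) (xs : seq nat) (phi : formula L) (z : nat) (F : formula L).
Hypotheses (phi_xs : vars_in xs phi) (z_xs : z \notin xs) (F_unary : forall x, free x F -> x = z).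

Fact xs_z x : x \in xs -> x != z.
Proof. by apply: contraTneq => ->. Qed.

Definition rest (S : seq nat) := [seq x <- xs | x \notin S].

(* S lists the variables taking values in F and E the pairs of equal variables.  The free
   variables of completion S E lie in S, which gives it finitely many solutions. *)
Definition completion (S : seq nat) (E : seq (nat * nat)) : formula L :=
  And (\big[@And L/FTrue]_(x <- S) F_at z F x)
      (Exs (rest S) (And (eq_pattern xs (fun x y => (x, y) \in E))
                         (And (\big[@And L/FTrue]_(x <- rest S) Not (F_at z F x)) phi))).

Lemma sat_completion (M : structure L) (e : nat -> M) S E : {subset S <= xs} ->
  sat e (completion S E) <-> (forall x, x \in S -> holds F (e x)) /\
    exists g : nat -> M, [/\ forall u, u \notin rest S -> g u = e u,
      forall x y, x \in xs -> y \in xs -> (g x = g y <-> (x, y) \in E),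
      forall x, x \in rest S -> ~ holds F (g x) & sat g phi].
Proof.
move=> S_xs; have rest_xs x : x \in rest S -> x \in xs by rewrite mem_filter => /andP[].
rewrite /completion /= sat_bigAnd sat_Exs.
have F_S (g : nat -> M) :
    (forall x, x \in S -> sat g (F_at z F x)) <-> (forall x, x \in S -> holds F (g x)).
  by split=> Fg x xS; have := Fg x xS; rewrite (sat_F_at F_unary) // xs_z // S_xs.
rewrite F_S; split=> -[FS [g g_def]]; split=> //; exists g.
  case: g_def => eq_g [/sat_eq_pattern pat [/sat_bigAnd nF phi_g]]; split=> // x xr Fx.
  have nFx : ~ sat g (F_at z F x) := nF x xr.
  by apply: nFx; rewrite (sat_F_at F_unary) ?xs_z ?rest_xs.
case: g_def => eq_g pat nF phi_g; split=> //; split; first exact/sat_eq_pattern.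
split=> //; apply/sat_bigAnd => x xr; change (~ sat g (F_at z F x)).
by rewrite (sat_F_at F_unary) ?xs_z ?rest_xs //; apply: nF.
Qed.

Lemma free_completion S E x : {subset S <= xs} -> free x (completion S E) -> x \in S.
Proof.
move=> S_xs /= [/free_bigAnd[y yS /(free_F_at F_unary) -> //]|/free_Exs[x_rest free_x]].
have xxs : x \in xs.
  case: free_x => [/free_eq_pattern //|[/free_bigAnd[y yr /(free_F_at F_unary) ->]|/phi_xs //]].
  by move: yr; rewrite mem_filter => /andP[].
by move: x_rest; rewrite mem_filter xxs andbT negbK.
Qed.

Definition pairs := [seq (x, y) | x <- xs, y <- xs].

Lemma mem_pairs x y : ((x, y) \in pairs) = (x \in xs) && (y \in xs).
Proof.
by apply/allpairsP/andP => [[[a b] [/= axs bxs [-> ->]]]|[xxs yxs]]; last exists (x, y).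
Qed.

Local Notation atom_index := ((nat * nat) + nat + (seq nat * seq (nat * nat)))%type.

Definition atom (i : atom_index) : formula L :=
  match i with
  | inl (inl (x, y)) => Eq (Var x) (Var y)
  | inl (inr x) => F_at z F x
  | inr (vs, E) => completion vs E
  end.

Definition atoms : seq atom_index :=
  [seq inl (inl p) | p <- pairs] ++ [seq inl (inr x) | x <- xs] ++
  [seq inr (vs, E) | vs <- subseqs xs, E <- subseqs pairs].

Variables (T : theory L) (N : structure L) (lF : seq {classic N}).
Hypotheses (T_complete : complete_theory T) (NT : is_model N T)
  (lF_F : forall a : N, holds F a <-> a \in lF)
  (phi_inv : pattern_invariant xs lF (fun e => sat e phi)).

Lemma F_bounded_fms S (chi : formula L) : vars_in S chi ->
  (forall (M : structure L) (e : nat -> M), sat e chi -> forall x, x \in S -> holds F (e x)) ->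
  finitely_many_solutions T chi.
Proof.
move=> chi_S chi_F M MT.
have [l l_F] := holds_finite_transfer F_unary T_complete NT (fun a => (lF_F a).1) MT.
by apply: (bounded_solutions (S := S) (l := l)) => // e /chi_F F_e x /F_e /l_F.
Qed.

Lemma atom_admissible i : i \in atoms ->
  (eq_atom xs (atom i) \/ (vars_in xs (atom i) /\ finitely_many_solutions T (atom i))) /\
  vars_in xs (atom i).
Proof.
rewrite !mem_cat => /or3P[/mapP[[x y]]|/mapP[x xxs ->]|/allpairsP[[S E] [/= S_sub _ ->]]].
- rewrite mem_pairs => /andP[xxs yxs] ->.
  by split; [left; exists x, y | move=> u /= [->|->]].
- have x_vars : vars_in xs (F_at z F x) by move=> u /(free_F_at F_unary) ->.
  split=> //; right; split=> //.
  apply: (F_bounded_fms (S := [:: x])) => [u /(free_F_at F_unary) ->|M e]; first exact: mem_head.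
  by rewrite (sat_F_at F_unary) ?xs_z // => Fx y; rewrite inE => /eqP ->.
- have S_xs := subseqs_sub S_sub.
  have SE_vars : vars_in xs (completion S E) by move=> u /(free_completion S_xs) /S_xs.
  split=> //; right; split=> //; apply: (F_bounded_fms (S := S)) => [u|M e].
    exact: free_completion.
  by case/(sat_completion _ _ S_xs).
Qed.

Lemma atoms_determine_phi (e e' : nat -> N) :
  (forall i, i \in atoms -> sat e (atom i) <-> sat e' (atom i)) -> sat e phi -> sat e' phi.
Proof.
move=> agree phi_e.
set S := [seq x <- xs | `[< holds F (e x) >]].
set E := [seq p <- pairs | `[< e p.1 = e p.2 >]].
have S_xs : {subset S <= xs} by move=> x; rewrite mem_filter => /andP[].
have inS x : x \in xs -> (x \in S) = `[< holds F (e x) >].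
  by move=> xxs; rewrite mem_filter xxs andbT.
have in_rest x : (x \in rest S) = (x \in xs) && ~~ `[< holds F (e x) >].
  rewrite [in LHS]/rest [in LHS]mem_filter andbC.
  by case xxs: (x \in xs) => //=; rewrite inS.
have eq_e' x y : x \in xs -> y \in xs -> e x = e y <-> e' x = e' y.
  by move=> xxs yxs; apply: (agree (inl (inl (x, y)))); rewrite mem_cat map_f // mem_pairs xxs yxs.
have F_e' x : x \in xs -> holds F (e x) <-> holds F (e' x).
  move=> xxs; rewrite -!(sat_F_at F_unary) ?xs_z //; apply: (agree (inl (inr x))).
  by rewrite !mem_cat map_f ?orbT.
have : sat e' (completion S E).
  apply/(agree (inr (S, E))); first by rewrite !mem_cat allpairs_f ?filter_subseqs ?orbT.
  apply/sat_completion => //; split=> [x /[dup] /S_xs /inS -> /asboolP //|].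
  exists e; split=> // [x y xxs yxs|x].
    by rewrite mem_filter mem_pairs xxs yxs /= andbT asboolE.
  by rewrite in_rest => /andP[_ /asboolPn].
case/sat_completion => // _ [g [g_e' g_pat g_rest phi_g]].
suff pat : same_pattern xs lF g e' by exact: (iffLR (phi_inv pat) phi_g).
split=> [x y xxs yxs|x c xxs /lF_F Fc].
  by rewrite g_pat // mem_filter mem_pairs xxs yxs /= andbT asboolE eq_e'.
have [xS|xS] := boolP (x \in S); first by rewrite g_e' // in_rest xxs -inS // xS.
have xr : x \in rest S by rewrite in_rest xxs -inS.
have nF' : ~ holds F (e' x) by rewrite -F_e' //; apply/asboolPn; rewrite -inS.
by split=> gc; [case: (g_rest x xr) | case: nF']; rewrite gc.
Qed.

Theorem definable_parameters_boolcomb :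
  exists psi, boolcomb (fun chi => eq_atom xs chi \/
                          (vars_in xs chi /\ finitely_many_solutions T chi)) psi
              /\ T_equiv T phi psi.
Proof.
have [psi [psi_bc psi_xs phi_psi]] :=
  @boolcomb_of_dependence L N (fun chi => eq_atom xs chi \/
    (vars_in xs chi /\ finitely_many_solutions T chi)) xs _ atom atoms (fun e => sat e phi)
    atom_admissible atoms_determine_phi.
by exists psi; split=> //; apply: (complete_T_equiv T_complete NT phi_xs psi_xs).
Qed.
End DefinableParameters.

(** * Relevant parameters *)

Section Relevance.
Variables (L : signature) (xs : seq nat) (phi : formula L).
Hypothesis phi_xs : vars_in xs phi.

Lemma eq_sat_xs (M : structure L) (g h : nat -> M) :
  (forall x, x \in xs -> g x = h x) -> sat g phi <-> sat h phi.
Proof. by move=> gh; apply: eq_sat => x /phi_xs /gh. Qed.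

Definition Subst (J : seq nat) (y : nat) : formula L :=
  Exs J (And (\big[@And L/FTrue]_(x <- J) Eq (Var x) (Var y)) phi).

Lemma sat_Subst (M : structure L) (e : nat -> M) J y :
  y \notin J -> sat e (Subst J y) <-> sat (upd_on e J (e y)) phi.
Proof.
move=> yJ; rewrite /Subst sat_Exs; split=> [[g [g_out [/sat_bigAnd g_y phi_g]]]|phi_e].
  suff -> : upd_on e J (e y) = g by [].
  apply: funext => u; rewrite /upd_on; case: ifP => [uJ|/negbT uJ]; last by rewrite g_out.
  by rewrite -(g_out y yJ); apply/esym/g_y.
exists (upd_on e J (e y)); split=> [u uJ|]; first by rewrite /upd_on (negbTE uJ).
by split=> //; apply/sat_bigAnd => x xJ /=; rewrite /upd_on xJ (negbTE yJ).
Qed.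

Lemma free_Subst J y x : free x (Subst J y) -> x = y \/ x \in xs.
Proof.
case/free_Exs=> xJ [/free_bigAnd[x' x'J [xx'|->]]|/phi_xs]; [|by left|by right].
by rewrite xx' x'J in xJ.
Qed.

Variables (N : structure L) (l : seq {classic N}).
Hypothesis phi_inv : pattern_invariant xs l (fun e => sat e phi).

(* Among K.+1 distinct values one avoids l and the values of xs, so only parameters in l
   can be relevant. *)
Let K := size l + size xs.
Let z := fresh_var xs.
Let ys := fresh (z :: xs) K.+1.

Definition is_class (e : nat -> N) (a : N) (J : seq nat) :=
  forall x, x \in xs -> (e x = a <-> x \in J).

Definition relevant (J : seq nat) (a : N) := exists (e : nat -> N) (ws : seq {classic N}),
  [/\ is_class e a J, uniq ws, size ws = K.+1 &
      forall w, w \in ws -> ~ (sat (upd_on e J w) phi <-> sat e phi)].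

Lemma same_pattern_upd_class (l' : seq {classic N}) e a J (w : N) : is_class e a J ->
  (forall x, x \in xs -> e x <> w) -> a \notin l' -> w \notin l' ->
  same_pattern xs l' e (upd_on e J w).
Proof.
move=> cls e_w a_l' w_l'; split=> [x y xxs yxs|x c xxs cl']; rewrite /upd_on.
  case xJ: (x \in J); case yJ: (y \in J) => //.
  - by move/(cls x xxs): xJ => ->; move/(cls y yxs): yJ => ->.
  - move/(cls x xxs): xJ => ->; split=> [ay|/esym/e_w //].
    by have := (cls y yxs).1 (esym ay); rewrite yJ.
  - move/(cls y yxs): yJ => ->; split=> [xa|/e_w //].
    by have := (cls x xxs).1 xa; rewrite xJ.
case xJ: (x \in J) => //; move/(cls x xxs): xJ => ->.
by split=> ac; [move: a_l' | move: w_l']; rewrite ac cl'.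
Qed.

Lemma relevant_in_l J a : relevant J a -> a \in l.
Proof.
case=> e [ws [cls ws_uniq size_ws change]]; apply: contraT => a_l.
have sub : {subset ws <= l ++ map e xs}.
  move=> w wws; apply: contraT; rewrite mem_cat negb_or => /andP[w_l w_e].
  have e_w x : x \in xs -> e x <> w by move=> xxs ex; move: w_e; rewrite -ex map_f.
  have /= same := phi_inv (same_pattern_upd_class cls e_w a_l w_l).
  by case: (change w wws); apply: iff_sym.
by have := uniq_leq_size ws_uniq sub; rewrite size_ws size_cat size_map ltnn.
Qed.

(* relevant J z, the K.+1 witnesses being the values of the fresh variables ys. *)
Definition Relevant (J : seq nat) : formula L :=
  Exs (xs ++ ys) (And (\big[@And L/FTrue]_(x <- xs) lit (x \in J) (Eq (Var x) (Var z)))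
                 (And (Dist ys) (\big[@And L/FTrue]_(y <- ys) Not (Iff (Subst J y) phi)))).

Definition Relevance : formula L := \big[@Or L/FFalse]_(J <- subseqs xs) Relevant J.

Fact ys_fresh y : y \in ys -> y != z /\ y \notin xs.
Proof. by move/fresh_notin; rewrite inE negb_or => /andP. Qed.

Lemma free_Relevance x : free x Relevance -> x = z.
Proof.
move=> /free_bigOr[J J_sub /free_Exs[]]; rewrite mem_cat negb_or => /andP[x_xs x_ys] free_x.
suff : [\/ x \in xs, x \in ys | x = z] by rewrite (negbTE x_xs) (negbTE x_ys) => -[].
case: free_x => [/free_bigAnd[y yxs]|
                 [/free_eq_pattern|/free_bigAnd[y yys /free_Iff[/free_Subst[]|]]]].
- by case: (y \in J) => /= [[->|->]|[->|->]]; constructor.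
- by constructor.
- by move->; constructor.
- by constructor.
- by move/phi_xs; constructor.
Qed.

Lemma sat_Relevant J a : J \in subseqs xs -> sat (fun _ => a) (Relevant J) <-> relevant J a.
Proof.
move=> /subseqs_sub J_xs.
have ys_J y : y \in ys -> y \notin J by case/ys_fresh => _; apply: contra => /J_xs.
have z_ys : z \notin ys by apply/negP => /ys_fresh[/eqP].
rewrite /Relevant sat_Exs; split.
  case=> g [g_out [/sat_bigAnd lits [/sat_Dist g_inj /sat_bigAnd diff]]].
  have gz : g z = a by apply: g_out; rewrite mem_cat negb_or fresh_var_notin.
  exists g, [seq (g y : {classic N}) | y <- ys]; split.
  - by move=> x xxs; have /sat_lit := lits x xxs; rewrite /= gz.
  - by rewrite map_inj_in_uniq ?iota_uniq.
  - by rewrite size_map size_iota.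
  move=> _ /mapP[y yys ->]; have nd : ~ sat g (Iff (Subst J y) phi) := diff y yys.
  by rewrite sat_Iff sat_Subst ?ys_J in nd.
case=> e [ws [cls ws_uniq size_ws change]].
have size_ws' : size ws = size ys by rewrite size_ws size_iota.
pose d u : {classic N} := if u \in xs then e u else a.
pose g := assign d ys ws.
have g_xs x : x \in xs -> g x = e x.
  by move=> xxs; rewrite /g assign_out /d ?xxs //; apply/negP => /ys_fresh[_]; rewrite xxs.
have gz : g z = a by rewrite /g assign_out // /d (negbTE (fresh_var_notin xs)).
exists g; split.
  move=> u; rewrite mem_cat negb_or => /andP[u_xs u_ys].
  by rewrite /g assign_out // /d (negbTE u_xs).
split; first by apply/sat_bigAnd => x xxs; apply/sat_lit => /=; rewrite g_xs // gz; apply: cls.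
split; first exact/sat_Dist/(assign_inj size_ws' ws_uniq).
apply/sat_bigAnd => y yys; change (~ sat g (Iff (Subst J y) phi)).
rewrite sat_Iff sat_Subst ?ys_J //.
have gy_ws : g y \in ws by rewrite -(map_assign d (iota_uniq _ _) size_ws') map_f.
rewrite (eq_sat_xs (h := upd_on e J (g y))) ?(eq_sat_xs (g := g) (h := e)) //; first exact: change.
by move=> x xxs; rewrite /upd_on; case: ifP => // _; apply: g_xs.
Qed.

Lemma holds_Relevance a : holds Relevance a <-> exists2 J, J \in subseqs xs & relevant J a.
Proof.
rewrite /holds sat_bigOr; split=> -[J J_sub rel]; exists J => //.
  by rewrite -sat_Relevant.
by rewrite sat_Relevant.
Qed.

Definition relevant_params : seq {classic N} := [seq a <- l | `[< holds Relevance a >]].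

Lemma mem_relevant_params (a : {classic N}) : holds Relevance a <-> a \in relevant_params.
Proof.
rewrite /relevant_params mem_filter; split=> [rel|/andP[/asboolP //]].
by rewrite asboolT //=; case/holds_Relevance: rel => J _ /relevant_in_l.
Qed.

Hypothesis N_infinite : forall l0 : seq {classic N}, exists a : N, a \notin l0.

Lemma irrelevant_fresh (e : nat -> N) a J (avoid : seq {classic N}) :
  is_class e a J -> ~ relevant J a ->
  exists2 w : {classic N}, w \notin avoid & (sat (upd_on e J w) phi <-> sat e phi).
Proof.
move=> cls irr; apply: contrapT => no_w; apply: irr.
have [ws [ws_uniq size_ws ws_avoid]] := uniq_avoiding avoid K.+1 N_infinite.
by exists e, ws; split=> // w wws same; apply: no_w; exists w => //; apply: ws_avoid.
Qed.

Definition spurious (e : nat -> N) x := e x \in l /\ ~ holds Relevance (e x).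

Lemma move_to_generic (s : seq nat) (e : nat -> N) :
  (forall x, x \in xs -> spurious e x -> x \in s) ->
  exists g, [/\ same_pattern xs relevant_params e g, sat e phi <-> sat g phi
              & forall x, x \in xs -> ~ spurious g x].
Proof.
elim: s e => [|x0 s IH] e bad_s; first by exists e; split=> // x xxs /(bad_s x xxs).
have [[x0xs [a_l a_irr]]|good0] := EM (x0 \in xs /\ spurious e x0); last first.
  apply: IH => x xxs bx; move: (bad_s x xxs bx); rewrite inE => /predU1P[x_x0|//].
  by case: good0; rewrite -x_x0.
set a := e x0; set J := [seq x <- xs | `[< e x = a >]].
have cls : is_class e a J by move=> x xxs; rewrite mem_filter xxs andbT asboolE.
have irr : ~ relevant J a.
  by move=> rel; apply: a_irr; apply/holds_Relevance; exists J; rewrite ?filter_subseqs.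
(* Trade the spurious parameter a for a fresh value w outside l. *)
have [w] := irrelevant_fresh (l ++ map e xs) cls irr.
rewrite mem_cat negb_or => /andP[w_l w_e] same.
have e_w x : x \in xs -> e x <> w by move=> xxs ex; move: w_e; rewrite -ex map_f.
have params_l : {subset relevant_params <= l} by move=> c; rewrite mem_filter => /andP[].
have a_params : a \notin relevant_params by apply/negP => /mem_relevant_params.
have w_params : w \notin relevant_params by apply: contra w_l; apply: params_l.
have pat1 := same_pattern_upd_class cls e_w a_params w_params.
have [|g [pat_g phi_g generic_g]] := IH (upd_on e J w).
  move=> x xxs; rewrite /spurious /upd_on; case: ifP => xJ [x_l x_irr].
    by rewrite x_l in w_l.
  move: (bad_s x xxs (conj x_l x_irr)); rewrite inE => /predU1P[x_x0|//].
  by have := (cls x0 x0xs).1 erefl; rewrite -x_x0 xJ.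
exists g; split=> //; first exact: same_pattern_trans pat1 pat_g.
by rewrite -phi_g same.
Qed.

Lemma pattern_invariant_relevant : pattern_invariant xs relevant_params (fun e => sat e phi).
Proof.
move=> e e' pat.
have [g [pat_g phi_g generic_g]] := @move_to_generic xs e (fun x xxs _ => xxs).
have [g' [pat_g' phi_g' generic_g']] := @move_to_generic xs e' (fun x xxs _ => xxs).
have [eq_gg' c_gg'] := same_pattern_trans (same_pattern_sym pat_g) (same_pattern_trans pat pat_g').
rewrite /= phi_g phi_g'; apply: phi_inv; split=> // x c xxs cl.
have [/mem_relevant_params|irr] := EM (holds Relevance c); first exact: c_gg'.
by split=> gc; [case: (generic_g x xxs) | case: (generic_g' x xxs)]; rewrite /spurious gc.
Qed.
End Relevance.

Lemma pattern_invariant_fms_boolcomb (L : signature) (T : theory L) xs phi (N : structure L)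
    (l : seq {classic N}) :
  complete_theory T -> vars_in xs phi -> is_model N T ->
  pattern_invariant xs l (fun e => sat e phi) ->
  exists psi, boolcomb (fun chi => eq_atom xs chi \/
                          (vars_in xs chi /\ finitely_many_solutions T chi)) psi
              /\ T_equiv T phi psi.
Proof.
move=> T_complete phi_xs NT phi_inv.
have z_xs := fresh_var_notin xs.
(* In a finite model every element counts as a parameter, defined by FTrue. *)
have [[all all_N]|N_infinite] := EM (exists all : seq {classic N}, forall a : N, a \in all).
  apply: (definable_parameters_boolcomb (F := FTrue) phi_xs z_xs _ (lF := all) T_complete NT).
  - by [].
  - by move=> a; split=> // _; apply: all_N.
  move=> e e' [_ c_e].
  apply: (eq_sat_xs phi_xs) => x xxs; have := c_e x (e x) xxs (all_N _).
  by case=> /(_ erefl).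
have {}N_infinite (l0 : seq {classic N}) : exists a : N, a \notin l0.
  apply: contrapT => all_l0; apply: N_infinite; exists l0 => a.
  by apply: contrapT => /negP a_l0; apply: all_l0; exists a.
apply: (definable_parameters_boolcomb phi_xs z_xs (free_Relevance phi_xs (l := l))
  (lF := relevant_params xs phi l) T_complete NT).
- exact: mem_relevant_params.
- exact: pattern_invariant_relevant.
Qed.

Lemma constantizable_pattern_invariant (L : signature) (T : theory L) xs phi :
  constantizable T xs phi ->
  exists N : structure L, is_model N T /\
    exists l : seq {classic N}, pattern_invariant xs l (fun e => sat e phi).
Proof.
case=> L' [E [T' [[_ [N' N'T'] _] T_T' [psi' [psi'_bc phi_psi']]]]].
exists (reduct E N'); split.
  by move=> s Ts e; apply/sat_reduct; apply: N'T'; apply: T_T'.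
have [l psi'_inv] : exists l : seq {classic N'}, pattern_invariant xs l (fun e => sat e psi').
  apply: boolcomb_pattern_invariant psi'_bc => chi [/eq_atom_pattern_invariant inv|].
    by exists [::].
  exact: const_atom_pattern_invariant.
by exists l => e e' pat; rewrite -!sat_reduct !(phi_psi' N' N'T'); apply: psi'_inv.
Qed.

Theorem proposition3p6 (L : signature) (T : theory L) (xs : seq nat) (phi : formula L) :
  complete_theory T -> vars_in xs phi ->
  (constantizable T xs phi <->
   exists psi, boolcomb (fun chi => eq_atom xs chi \/
                          (vars_in xs chi /\ finitely_many_solutions T chi)) psi
               /\ T_equiv T phi psi).
Proof.
move=> T_complete phi_xs; split; last exact: fms_boolcomb_constantizable.
case/constantizable_pattern_invariant => N [NT [l phi_inv]].
exact: pattern_invariant_fms_boolcomb T_complete phi_xs NT phi_inv.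
Qed.
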